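(* Let $0<q<1$, $N$ a positive integer, $n\in\{0,1,\dots,N\}$, and $\gamma\in\mathbb{C}$ with $\gamma q,\gamma q^2,\gamma q^3\notin\{q^{-j}:j\in\mathbb{Z}_{\ge0}\}$. Then $${}_4\phi_3\!\left(\begin{matrix}q^{-2n-1},q^{-2(N-n)},q^{-x},-\gamma q^{x+1}\\ q^{-N},-q^{-N},\gamma q\end{matrix};q,q\right)=\frac{q^{-x}-\gamma q^{x+1}}{1-\gamma q}\;{}_4\phi_3\!\left(\begin{matrix}q^{-2n},q^{2n-2N+1},q^{-2x},\gamma^2q^{2x+2}\\ q^{-2N},\gamma q^2,\gamma q^3\end{matrix};q^2,q^2\right)$$ holds for all $x\in\mathbb{C}$ if $2n+1\le N$, and holds for $x\in\{0,1,\dots,N\}$ if $2n+1>N$.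
   Context: $(x;q)_k=\prod_{j=0}^{k-1}(1-xq^j)$. A terminating ${}_4\phi_3\!\left(\begin{matrix}a_1,\dots,a_4\\ b_1,b_2,b_3\end{matrix};p,p\right)$ (base $p$, here $p=q$ or $p=q^2$) means $\sum_{k=0}^K\frac{(a_1,\dots,a_4;p)_k}{(b_1,b_2,b_3,p;p)_k}p^k$, where $K$ is the smallest nonnegative integer such that some numerator parameter $a_i$ equals $p^{-K}$ (the sum is truncated at the first numerator parameter that causes termination). *)

From HB Require Import structures.
From mathcomp Require Import all_boot all_order all_algebra.
Set Implicit Arguments. Unset Strict Implicit. Unset Printing Implicit Defensive.
Import Order.TTheory GRing.Theory Num.Theory.
Local Open Scope ring_scope.

Definition qpoch (R : numClosedFieldType) (x q : R) (k : nat) : R :=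
  \prod_(j < k) (1 - x * q ^+ j).

(* Termination index: smallest K < fuel such that some numerator parameter
   equals p^{-K} (returns fuel if none is found below fuel). *)
Definition term_index (R : numClosedFieldType) (p : R) (a : seq R) (fuel : nat) : nat :=
  find (fun k => has (fun c => c == p ^- k) a) (iota 0 fuel).

(* Terminating 4phi3 with base p, argument p, truncated at the termination
   index K (sum over k = 0..K). *)
Definition phi43 (R : numClosedFieldType) (p a1 a2 a3 a4 b1 b2 b3 : R)
    (fuel : nat) : R :=
  let K := term_index p [:: a1; a2; a3; a4] fuel in
  \sum_(k < K.+1)
    (qpoch a1 p k * qpoch a2 p k * qpoch a3 p k * qpoch a4 p k)
    / (qpoch b1 p k * qpoch b2 p k * qpoch b3 p k * qpoch p p k) * p ^+ k.

(* Put a := q^-N and u := z - gamma q / z, where z = q^-x.  For each m let P_m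
   be the left-hand side with q^(-2n-1) replaced by q^-m (its second parameter
   q^(-2(N-n)) = a^2 q^(2n) then becomes a^2 q^(m-1)), and let Q_n be the
   right-hand side sum.  Summation by parts in the summation index, fed with
   contiguous relations of the summands, gives a three-term recurrence
   u P_m = alpha_m P_(m+1) + delta_m P_(m-1) with delta_0 = 0.  Applied twice it
   yields a recurrence in u^2 for the odd terms P_(2n+1), which the Q_n satisfy
   as well; since P_1 = u / (1 - gamma q) Q_0, induction on n gives
   P_(2n+1) = u / (1 - gamma q) Q_n.  The boundary term of the summation by
   parts vanishes when the sum terminates at some k <= N through q^-(m+1) or
   through z = q^-x with x <= N; this is why x must lie in {0,...,N} when
   2n+1 > N. *)

From HB Require Import structures.
From mathcomp Require Import all_boot all_order all_algebra.
From mathcomp Require Import ring zify.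
Import Order.TTheory GRing.Theory Num.Theory.
Local Open Scope ring_scope.
Set Implicit Arguments. Unset Strict Implicit.

(* Summation by parts: with H_(k+1) := F_k e_(k+1) / (D_k r_k) and H_0 := 0,
   u F_k e_k / D_k = G_k e_k / D_k - (H_(k+1) - H_k), and H_(B+1) = 0. *)
Lemma sum_by_parts (R : fieldType) (e D F G b r d : nat -> R) (u : R) (B : nat) :
  (forall k, e k.+1 = e k * (b k - r k * u)) ->
  (forall k, r k != 0) ->
  (forall k, D k.+1 = D k * d k) ->
  (forall k, (k <= B)%N -> e k != 0 -> D k != 0) ->
  F B = 0 \/ e B.+1 = 0 ->
  F 0%N * b 0%N / r 0%N = G 0%N ->
  (forall k, F k.+1 * b k.+1 / r k.+1 - F k * d k / r k = G k.+1) ->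
  u * \sum_(k < B.+1) F k / D k * e k = \sum_(k < B.+1) G k / D k * e k.
Proof.
move=> eS r_neq0 DS D_neq0 boundary G0 GS.
pose H k := if k is k'.+1 then F k' / (D k' * r k') * e k else 0.
have summand k : (k <= B)%N -> u * (F k / D k * e k) = G k / D k * e k - (H k.+1 - H k).
  move=> le_kB; have [ek0|ek_neq0] := eqVneq (e k) 0.
    case: k {le_kB} ek0 => [|k] ek0; first by rewrite /H (eS 0%N) ek0 !(mul0r, mulr0, subr0).
    by rewrite /H (eS k.+1) ek0 !(mul0r, mulr0, subr0).
  have Dk_neq0 := D_neq0 k le_kB ek_neq0.
  case: k le_kB ek_neq0 Dk_neq0 => [|k] _ _ Dk_neq0.
    by rewrite /H (eS 0%N) -G0 subr0; field; rewrite Dk_neq0 r_neq0.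
  move: Dk_neq0; rewrite DS mulf_eq0 negb_or => /andP[Dk_neq0 dk_neq0].
  rewrite /H (eS k.+1) -GS DS; field.
  by rewrite Dk_neq0 dk_neq0 !r_neq0.
rewrite mulr_sumr (eq_bigr (fun k : 'I_B.+1 => G k / D k * e k - (H k.+1 - H k))); last first.
  by move=> k _; apply: summand; rewrite -ltnS.
rewrite sumrB -(big_mkord xpredT (fun k => H k.+1 - H k)) telescope_sumr // /H /=.
suff -> : F B / (D B * r B) * e B.+1 = 0 by rewrite !subr0.
by case: boundary => ->; rewrite ?mul0r ?mulr0.
Qed.

(* Two steps of the three-term recurrence for P give the recurrence assumed for
   Q; [de 0 = 0] makes the junk value [P 0.-1 = P 0] harmless. *)
Lemma odd_terms_eq (R : fieldType) (P Q al de : nat -> R) (u c : R) (n0 : nat) :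
  (forall m, (m <= 2 * n0)%N -> u * P m = al m * P m.+1 + de m * P m.-1) ->
  de 0%N = 0 ->
  (forall n, (n < n0)%N -> u ^+ 2 * Q n = al (2 * n).+1 * al (2 * n).+2 * Q n.+1
      + (al (2 * n).+1 * de (2 * n).+2 + de (2 * n).+1 * al (2 * n)%N) * Q n
      + de (2 * n).+1 * de (2 * n)%N * Q n.-1) ->
  (forall n, (n < n0)%N -> al (2 * n).+1 * al (2 * n).+2 != 0) ->
  P 1%N = c * Q 0%N ->
  forall n, (n <= n0)%N -> P (2 * n).+1 = c * Q n.
Proof.
move=> recP de0 recQ al_neq0 P1; elim/ltn_ind => -[|n] IH lt_n_n0; first exact: P1.
have IHn := IH n (ltnSn n) (ltnW lt_n_n0).
have IHn' : de (2 * n)%N * P (2 * n).-1 = de (2 * n)%N * (c * Q n.-1).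
  case: n IH lt_n_n0 {IHn} => [|n] IH lt_n_n0; first by rewrite de0 !mul0r.
  by rewrite mulnS add2n /= IH //; lia.
move: IHn IHn' (al_neq0 n lt_n_n0) (recQ n lt_n_n0) (recP (2 * n)%N ltac:(lia)).
move: (recP (2 * n).+1 ltac:(lia)) (recP (2 * n).+2 ltac:(lia)); rewrite mulnS add2n /=.
set a0 := al (2 * n)%N; set a1 := al (2 * n).+1; set a2 := al (2 * n).+2.
set d0 := de (2 * n)%N; set d1 := de (2 * n).+1; set d2 := de (2 * n).+2.
set pm := P (2 * n).-1; set p0 := P (2 * n)%N; set p1 := P (2 * n).+1.
set p2 := P (2 * n).+2; set p3 := P (2 * n).+3.
set qm := Q n.-1; set q0 := Q n; set q1 := Q n.+1.
move=> rec2 rec1 IHn IHn' a12_neq0 recQn rec0; apply: (mulfI a12_neq0); apply/eqP.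
rewrite -subr_eq0; apply/eqP.
transitivity (- a1 * (u * p2 - (a2 * p3 + d2 * p1)) - u * (u * p1 - (a1 * p2 + d1 * p0))
  - d1 * (u * p0 - (a0 * p1 + d0 * pm))
  + c * (u ^+ 2 * q0 - (a1 * a2 * q1 + (a1 * d2 + d1 * a0) * q0 + d1 * d0 * qm))
  + (u ^+ 2 - (a1 * d2 + d1 * a0)) * (p1 - c * q0) - d1 * (d0 * pm - d0 * (c * qm))).
  by ring.
by rewrite rec2 rec1 rec0 recQn !subrr IHn IHn' !subrr; ring.
Qed.

Lemma exprn_double (R : pzSemiRingType) (x : R) n : x ^+ (2 * n) = x ^+ n * x ^+ n.
Proof. by rewrite mul2n -addnn exprD. Qed.

Lemma exprn_sq (R : pzSemiRingType) (x : R) n : (x ^+ 2) ^+ n = x ^+ n * x ^+ n.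
Proof. by rewrite -exprM exprn_double. Qed.

Lemma expVnS (R : fieldType) (x : R) n : x != 0 -> x ^- n = x ^- n.+1 * x.
Proof. by move=> x_neq0; rewrite exprS; field; rewrite x_neq0 expf_neq0. Qed.

Section QPochhammer.
Variable R : numClosedFieldType.
Implicit Types (x p : R) (k : nat).

Lemma qpoch0 x p : qpoch x p 0 = 1.
Proof. by rewrite /qpoch big_ord0. Qed.

Lemma qpochS x p k : qpoch x p k.+1 = qpoch x p k * (1 - x * p ^+ k).
Proof. by rewrite /qpoch big_ord_recr. Qed.

Lemma qpochSl x p k : qpoch x p k.+1 = (1 - x) * qpoch (x * p) p k.
Proof.
rewrite /qpoch big_ord_recl expr0 mulr1; congr (_ * _).
by apply: eq_bigr => i _; rewrite /bump /= exprS mulrA.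
Qed.

Lemma qpoch1 x p : qpoch x p 1 = 1 - x.
Proof. by rewrite qpochS qpoch0 mul1r expr0 mulr1. Qed.

Lemma qpochSSl x p k : qpoch x p k.+2 = (1 - x) * (1 - x * p) * qpoch (x * p * p) p k.
Proof. by rewrite !qpochSl mulrA. Qed.

Lemma qpochSlS x p k :
  qpoch (x * p) p k.+2 = (1 - x * p) * qpoch (x * p * p) p k * (1 - x * p * p * p ^+ k).
Proof. by rewrite qpochSl qpochS mulrA. Qed.

Lemma qpochSS x p k :
  qpoch x p k.+2 = qpoch x p k * (1 - x * p ^+ k) * (1 - x * p ^+ k.+1).
Proof. by rewrite !qpochS. Qed.

Lemma qpoch_neq0 x p k : (forall i, (i < k)%N -> 1 - x * p ^+ i != 0) -> qpoch x p k != 0.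
Proof. by move=> neq0; apply/prodf_neq0 => i _; apply: neq0. Qed.

Lemma qpoch_expVn_eq0 p j k : p != 0 -> (j < k)%N -> qpoch (p ^- j) p k = 0.
Proof.
move=> p_neq0 lt_jk; apply/eqP; rewrite prodf_seq_eq0; apply/hasP.
exists (Ordinal lt_jk); first by rewrite mem_index_enum.
by rewrite /= mulVf ?subrr // expf_neq0.
Qed.

End QPochhammer.

Lemma term_indexP (R : numClosedFieldType) (p : R) (s : seq R) fuel j :
  (j < fuel)%N -> has (fun c => c == p ^- j) s ->
  (term_index p s fuel <= j)%N /\ has (fun c => c == p ^- term_index p s fuel) s.
Proof.
move=> lt_j_fuel hj; rewrite /term_index.
have hfind : has (fun k => has (fun c => c == p ^- k) s) (iota 0 fuel).
  by apply/hasP; exists j; rewrite ?mem_iota.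
have lt_find := hfind; rewrite has_find size_iota in lt_find.
split; last by have := nth_find 0%N hfind; rewrite nth_iota.
rewrite leqNgt; apply/negP => lt_j_find.
by have := before_find 0%N lt_j_find; rewrite nth_iota // add0n hj.
Qed.

Lemma big_ord_widen_eq0 (R : nmodType) (F : nat -> R) K N :
  (K <= N)%N -> (forall k, (K < k)%N -> F k = 0) ->
  \sum_(k < K.+1) F k = \sum_(k < N.+1) F k.
Proof.
move=> le_KN F_eq0; rewrite (big_ord_widen N.+1 F) // big_mkcond.
by apply: eq_bigr => k _; case: ifP => // /negbT; rewrite -leqNgt => /F_eq0 ->.
Qed.

Definition phi43_term (R : numClosedFieldType) (p a1 a2 a3 a4 b1 b2 b3 : R) (k : nat) : R :=
  qpoch a1 p k * qpoch a2 p k * qpoch a3 p k * qpoch a4 p k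
  / (qpoch b1 p k * qpoch b2 p k * qpoch b3 p k * qpoch p p k) * p ^+ k.

Lemma phi43E (R : numClosedFieldType) (p a1 a2 a3 a4 b1 b2 b3 : R) fuel N j :
  p != 0 -> (j <= N)%N -> (j < fuel)%N -> has (fun c => c == p ^- j) [:: a1; a2; a3; a4] ->
  phi43 p a1 a2 a3 a4 b1 b2 b3 fuel
  = \sum_(k < N.+1) phi43_term p a1 a2 a3 a4 b1 b2 b3 k.
Proof.
move=> p_neq0 le_jN lt_j_fuel hj.
have [le_Kj hK] := term_indexP lt_j_fuel hj.
rewrite /phi43 (big_ord_widen_eq0 (F := phi43_term p a1 a2 a3 a4 b1 b2 b3)
  (leq_trans le_Kj le_jN)) // => k lt_Kk.
move: hK => /hasP[c]; rewrite !inE /phi43_term => /or4P[] /eqP -> /eqP ->;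
  by rewrite qpoch_expVn_eq0 // !(mul0r, mulr0).
Qed.

Section ContiguousRelations.
Variables (R : numClosedFieldType) (q g a : R).
Hypothesis q_neq0 : q != 0.
(* a^2 q^(2j-1) <> 1: the denominators of [alpha] do not vanish. *)
Hypothesis a2_neq : forall j, a * a * q ^+ j.*2 != q.

Definition alpha (m : nat) : R :=
  (1 - a * a * q ^+ m / q) * (1 - g * q ^+ m.+1) / (1 - a * a * (q ^+ m * q ^+ m) / q).
Definition delta (m : nat) : R := 1 - g * q - alpha m.

Definition wP (m k : nat) : R :=
  qpoch (q ^- m) q k * qpoch (a * a * q ^+ m / q) q k * q ^+ k.
Definition denP (k : nat) : R :=
  qpoch a q k * qpoch (- a) q k * qpoch (g * q) q k * qpoch q q k.
Definition baseP (z : R) (k : nat) : R := qpoch z q k * qpoch (- g * q / z) q k.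
Definition sumP (N : nat) (z : R) (m : nat) : R :=
  \sum_(k < N.+1) wP m k / denP k * baseP z k.

Definition wQ (n k : nat) : R := qpoch ((q ^+ 2) ^- n) (q ^+ 2) k
  * qpoch (a * a * (q ^+ 2) ^+ n * q) (q ^+ 2) k * (q ^+ 2) ^+ k.
Definition denQ (k : nat) : R := qpoch (a * a) (q ^+ 2) k * qpoch (g * q ^+ 2) (q ^+ 2) k
  * qpoch (g * q ^+ 3) (q ^+ 2) k * qpoch (q ^+ 2) (q ^+ 2) k.
Definition baseQ (z : R) (k : nat) : R :=
  qpoch (z ^+ 2) (q ^+ 2) k * qpoch (g ^+ 2 * q ^+ 2 / z ^+ 2) (q ^+ 2) k.
Definition sumQ (N : nat) (z : R) (n : nat) : R :=
  \sum_(k < N.+1) wQ n k / denQ k * baseQ z k.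

Definition base_factor (k : nat) : R := 1 - g * q * (q ^+ k * q ^+ k).
Definition denP_factor (k : nat) : R :=
  (1 - a * q ^+ k) * (1 - (- a) * q ^+ k) * (1 - g * q * q ^+ k) * (1 - q * q ^+ k).
Definition denQ_factor (k : nat) : R := (1 - a * a * (q ^+ 2) ^+ k)
  * (1 - g * q ^+ 2 * (q ^+ 2) ^+ k) * (1 - g * q ^+ 3 * (q ^+ 2) ^+ k) * (1 - q ^+ 2 * (q ^+ 2) ^+ k).

Lemma alpha_den_neq0 m : 1 - a * a * (q ^+ m * q ^+ m) / q != 0.
Proof.
rewrite -[1](mulfV q_neq0) -mulrBl mulf_neq0 ?invr_neq0 //.
by rewrite subr_eq0 eq_sym -exprD addnn.
Qed.

Lemma one_sub_a2q_neq0 j : 1 - a * a * (q * q ^+ j * q ^+ j) != 0.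
Proof.
apply: contra_neq (alpha_den_neq0 j.+1) => <-.
by rewrite !exprS; field.
Qed.

Lemma alpha0 : alpha 0 = 1 - g * q.
Proof.
rewrite /alpha !expr0 expr1 !mulr1; field.
by rewrite q_neq0 subr_eq0 eq_sym; have := a2_neq 0; rewrite double0 expr0 mulr1.
Qed.

Lemma delta0 : delta 0 = 0.
Proof. by rewrite /delta alpha0 subrr. Qed.

Lemma baseP_S z k : z != 0 ->
  baseP z k.+1 = baseP z k * (base_factor k - q ^+ k * (z - g * q / z)).
Proof. by move=> z_neq0; rewrite /baseP !qpochS /base_factor; field. Qed.

Lemma baseQ_S z k : z != 0 ->
  baseQ z k.+1 = baseQ z k * (base_factor k ^+ 2 - (q ^+ 2) ^+ k * (z - g * q / z) ^+ 2).
Proof. by move=> z_neq0; rewrite /baseQ !qpochS /base_factor exprn_sq; field. Qed.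

Lemma denP_S k : denP k.+1 = denP k * denP_factor k.
Proof. by rewrite /denP /denP_factor !qpochS; ring. Qed.

Lemma denQ_S k : denQ k.+1 = denQ k * denQ_factor k.
Proof. by rewrite /denQ /denQ_factor !qpochS; ring. Qed.

Lemma wP_contiguous m k :
  wP m.+1 k.+1 * base_factor k.+1 / q ^+ k.+1 - wP m.+1 k * denP_factor k / q ^+ k
  = alpha m.+1 * wP m.+2 k.+1 + delta m.+1 * wP m k.+1.
Proof.
have den_neq0 : 1 - a * a * (q ^+ m * (q * q ^+ m)) != 0.
  by apply: contra_neq (one_sub_a2q_neq0 m) => <-; ring.
have e1 : q ^- m.+1 = q ^- m.+2 * q by apply: expVnS.
have e0 : q ^- m = q ^- m.+2 * q * q by rewrite -e1; apply: expVnS.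
have f1 : a * a * q ^+ m.+1 / q = a * a * q ^+ m / q * q by rewrite exprS; field.
have f2 : a * a * q ^+ m.+2 / q = a * a * q ^+ m / q * q * q by rewrite !exprS; field.
(* Write every Pochhammer symbol through (t;q)_i and (s;q)_i, so that [field]
   only sees common atoms. *)
rewrite /wP e1 e0 f1 f2.
set t := q ^- m.+2; set s := a * a * q ^+ m / q.
case: k => [|i].
  rewrite !qpoch1 !qpoch0 /t /s /delta /alpha /base_factor /denP_factor !exprS !expr0.
  by field; rewrite q_neq0 den_neq0 expf_neq0.
rewrite (qpochSlS t) (qpochSlS s) (qpochSl (t * q)) (qpochSl (s * q)).
rewrite (qpochSS (t * q * q)) (qpochSS (s * q * q)) (qpochSSl t) (qpochSSl s).
rewrite /t /s /delta /alpha /base_factor /denP_factor !exprS.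
by field; rewrite q_neq0 den_neq0 !expf_neq0.
Qed.

Lemma wQ_contiguous n k :
  wQ n.+1 k.+1 * base_factor k.+1 ^+ 2 / (q ^+ 2) ^+ k.+1
    - wQ n.+1 k * denQ_factor k / (q ^+ 2) ^+ k
  = alpha (2 * n.+1).+1 * alpha (2 * n.+1).+2 * wQ n.+2 k.+1
    + (alpha (2 * n.+1).+1 * delta (2 * n.+1).+2
       + delta (2 * n.+1).+1 * alpha (2 * n.+1)) * wQ n.+1 k.+1
    + delta (2 * n.+1).+1 * delta (2 * n.+1) * wQ n k.+1.
Proof.
have h1 : 1 - a * a * (q * (q ^+ n * q ^+ n) * (q * (q * (q ^+ n * q ^+ n)))) != 0.
  by apply: contra_neq (one_sub_a2q_neq0 (2 * n).+1) => <-; rewrite exprS exprn_double; ring.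
have h2 : 1 - a * a * (q * (q * (q ^+ n * q ^+ n)) * (q * (q * (q * (q ^+ n * q ^+ n)))))
    != 0.
  by apply: contra_neq (one_sub_a2q_neq0 (2 * n).+2) => <-; rewrite !exprS exprn_double; ring.
have h3 : 1 - a * a * (q * (q * (q * (q ^+ n * q ^+ n)))
    * (q * (q * (q * (q * (q ^+ n * q ^+ n)))))) != 0.
  by apply: contra_neq (one_sub_a2q_neq0 (2 * n).+3) => <-; rewrite !exprS exprn_double; ring.
have q2_neq0 : q ^+ 2 != 0 by rewrite expf_neq0.
have e1 : (q ^+ 2) ^- n.+1 = (q ^+ 2) ^- n.+2 * q ^+ 2 by apply: expVnS.
have e0 : (q ^+ 2) ^- n = (q ^+ 2) ^- n.+2 * q ^+ 2 * q ^+ 2.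
  by rewrite -e1; apply: expVnS.
have f1 : a * a * (q ^+ 2) ^+ n.+1 * q = a * a * (q ^+ 2) ^+ n * q * q ^+ 2.
  by rewrite exprS; ring.
have f2 : a * a * (q ^+ 2) ^+ n.+2 * q = a * a * (q ^+ 2) ^+ n * q * q ^+ 2 * q ^+ 2.
  by rewrite !exprS; ring.
rewrite /wQ e1 e0 f1 f2 !mulnS !add2n.
set p := q ^+ 2; set t := p ^- n.+2; set s := a * a * p ^+ n * q.
case: k => [|i].
  rewrite !qpoch1 !qpoch0 /t /s /p /delta /alpha /base_factor /denQ_factor.
  rewrite !exprn_sq !exprS !expr0 !exprn_double.
  by field; rewrite q_neq0 h1 h2 h3 ?expf_neq0.
rewrite (qpochSlS t) (qpochSlS s) (qpochSl (t * p)) (qpochSl (s * p)).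
rewrite (qpochSS (t * p * p)) (qpochSS (s * p * p)) (qpochSSl t) (qpochSSl s).
rewrite /t /s /p /delta /alpha /base_factor /denQ_factor.
rewrite !exprn_sq !exprS !expr0 !exprn_double.
by field; rewrite q_neq0 h1 h2 h3 !expf_neq0.
Qed.

Lemma wQ_contiguous0 n :
  wQ n.+1 0 * base_factor 0 ^+ 2
  = alpha (2 * n.+1).+1 * alpha (2 * n.+1).+2 * wQ n.+2 0
    + (alpha (2 * n.+1).+1 * delta (2 * n.+1).+2
       + delta (2 * n.+1).+1 * alpha (2 * n.+1)) * wQ n.+1 0
    + delta (2 * n.+1).+1 * delta (2 * n.+1) * wQ n 0.
Proof.
rewrite /wQ !qpoch0 !expr0 !mul1r /base_factor /delta !expr0 !mulr1; ring.
Qed.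

Lemma sumP0 N z : sumP N z 0 = 1.
Proof.
rewrite /sumP big_ord_recl big1 => [|k _]; last by rewrite /wP qpoch_expVn_eq0 // !mul0r.
by rewrite addr0 /wP /denP /baseP !qpoch0 !expr0; field.
Qed.

Lemma sumQ0 N z : sumQ N z 0 = 1.
Proof.
rewrite /sumQ big_ord_recl big1 => [|k _].
  by rewrite addr0 /wQ /denQ /baseQ !qpoch0 !expr0; field.
by rewrite /wQ qpoch_expVn_eq0 ?expf_neq0 // !mul0r.
Qed.

Lemma sumP1 N z : (0 < N)%N -> sumP N z 1 = 1 + wP 1 1 / denP 1 * baseP z 1.
Proof.
case: N => // N _; rewrite /sumP 2!big_ord_recl big1 => [|k _].
  by rewrite addr0; congr (_ + _); rewrite /wP /denP /baseP !qpoch0 !expr0; field.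
by rewrite /wP qpoch_expVn_eq0 // !mul0r.
Qed.

Lemma sumQ1 N z : (0 < N)%N -> sumQ N z 1 = 1 + wQ 1 1 / denQ 1 * baseQ z 1.
Proof.
case: N => // N _; rewrite /sumQ 2!big_ord_recl big1 => [|k _].
  by rewrite addr0; congr (_ + _); rewrite /wQ /denQ /baseQ !qpoch0 !expr0; field.
by rewrite /wQ qpoch_expVn_eq0 ?expf_neq0 // !mul0r.
Qed.

Lemma sumP_rec N z m : z != 0 -> (0 < N)%N -> (forall k, (k <= N)%N -> denP k != 0) ->
  (m < N)%N \/ baseP z N.+1 = 0 ->
  (z - g * q / z) * sumP N z m = alpha m * sumP N z m.+1 + delta m * sumP N z m.-1.
Proof.
move=> z_neq0 N_gt0 denP_neq0; case: m => [_|m boundary].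
  have := denP_neq0 1%N N_gt0; rewrite /denP !qpoch1 !mulf_eq0 !negb_or.
  move=> /andP[/andP[/andP[h1 h2] h3] h4].
  rewrite delta0 mul0r addr0 alpha0 sumP0 sumP1 // /wP /denP /baseP !qpoch1 !expr1.
  by field; rewrite z_neq0 h1 h2 h3 h4 q_neq0.
rewrite /sumP (@sum_by_parts _ (baseP z) denP (wP m.+1)
  (fun k => alpha m.+1 * wP m.+2 k + delta m.+1 * wP m k)
  base_factor (fun k => q ^+ k) denP_factor).
- rewrite !mulr_sumr -big_split; apply: eq_bigr => k _ /=.
  by rewrite !mulrDl !mulrA.
- by move=> k; apply: baseP_S.
- by move=> k; apply: expf_neq0.
- exact: denP_S.
- by move=> k le_kN _; apply: denP_neq0.
- case: boundary => [lt_mN|->]; last by right.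
  by left; rewrite /wP qpoch_expVn_eq0 // !mul0r.
- by rewrite /wP !qpoch0 /base_factor !expr0 divr1 /delta; ring.
- exact: wP_contiguous.
Qed.

Lemma sumQ_rec N z n : z != 0 -> (n < N)%N -> (forall k, (k <= N)%N -> denQ k != 0) ->
  (z - g * q / z) ^+ 2 * sumQ N z n
  = alpha (2 * n).+1 * alpha (2 * n).+2 * sumQ N z n.+1
    + (alpha (2 * n).+1 * delta (2 * n).+2 + delta (2 * n).+1 * alpha (2 * n)%N) * sumQ N z n
    + delta (2 * n).+1 * delta (2 * n)%N * sumQ N z n.-1.
Proof.
move=> z_neq0 lt_nN denQ_neq0; case: n lt_nN => [|n] lt_nN.
  have := denQ_neq0 1%N lt_nN; rewrite /denQ !qpoch1 !mulf_eq0 !negb_or.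
  move=> /andP[/andP[/andP[h1 h2] h3] h4].
  rewrite delta0 alpha0 mulr0 mul0r addr0 sumQ0 sumQ1 // /wQ /denQ /baseQ !qpoch1 !expr1.
  have h5 : 1 - a * a * q != 0.
    by apply: contra_neq (one_sub_a2q_neq0 0) => <-; ring.
  have h6 : 1 - a * a * (q * q ^+ 2) != 0.
    by apply: contra_neq (one_sub_a2q_neq0 1) => <-; ring.
  rewrite /delta /alpha.
  by field; rewrite q_neq0 z_neq0 h1 h2 h3 h4 h5 h6.
rewrite /sumQ (@sum_by_parts _ (baseQ z) denQ (wQ n.+1)
  (fun k => alpha (2 * n.+1).+1 * alpha (2 * n.+1).+2 * wQ n.+2 k
    + (alpha (2 * n.+1).+1 * delta (2 * n.+1).+2
       + delta (2 * n.+1).+1 * alpha (2 * n.+1)) * wQ n.+1 k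
    + delta (2 * n.+1).+1 * delta (2 * n.+1) * wQ n k)
  (fun k => base_factor k ^+ 2) (fun k => (q ^+ 2) ^+ k) denQ_factor).
- rewrite !mulr_sumr -!big_split; apply: eq_bigr => k _ /=.
  by rewrite !mulrDl !mulrA.
- by move=> k; apply: baseQ_S.
- by move=> k; rewrite !expf_neq0.
- exact: denQ_S.
- by move=> k le_kN _; apply: denQ_neq0.
- by left; rewrite /wQ qpoch_expVn_eq0 ?expf_neq0 // !mul0r.
- by rewrite expr0 divr1 wQ_contiguous0.
- exact: wQ_contiguous.
Qed.

End ContiguousRelations.

Section Specialization.
Variables (R : numClosedFieldType) (q g : R) (N : nat).
Hypotheses (q_gt0 : 0 < q) (q_lt1 : q < 1).
Hypothesis g_generic : forall k j : nat, (1 <= k <= 3)%N -> g * q ^+ k != q ^- j.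

Local Notation a := (q ^- N).

Lemma q_neq0 : q != 0.
Proof. by rewrite gt_eqF. Qed.

Lemma expq_eq i j : (q ^+ i == q ^+ j) = (i == j).
Proof. by rewrite (inj_eq (ieexprIn q_gt0 _)) // lt_eqF. Qed.

Lemma one_sub_expVn_expn_neq0 i j : i != j -> 1 - q ^- i * q ^+ j != 0.
Proof.
move=> neq_ij; apply: contra_neq neq_ij => /subr0_eq eq1.
by apply/eqP; rewrite -expq_eq -[q ^+ i]mulr1 eq1 mulVKf // expf_neq0 // q_neq0.
Qed.

Lemma one_add_expVn_expn_neq0 i j : 1 - - q ^- i * q ^+ j != 0.
Proof.
by rewrite mulNr opprK gt_eqF // addr_gt0 ?ltr01 // mulr_gt0 ?invr_gt0 ?exprn_gt0.
Qed.

Lemma one_sub_expSn_neq0 j : 1 - q * q ^+ j != 0.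
Proof. by rewrite subr_eq0 eq_sym -exprS lt_eqF // exprn_ilt1 // ltW. Qed.

Lemma one_sub_g_neq0 k j : (1 <= k <= 3)%N -> 1 - g * q ^+ k * q ^+ j != 0.
Proof.
move=> hk; apply: contra_neq (g_generic j hk) => /subr0_eq eq1.
by rewrite -[g * q ^+ k](mulfK (expf_neq0 j q_neq0)) -eq1 mul1r.
Qed.

Lemma a2_neq j : a * a * q ^+ j.*2 != q.
Proof.
apply: contra_neq (@one_sub_expVn_expn_neq0 N.*2.+1 j.*2 _) => [eq_q|]; last first.
  by apply/eqP; rewrite -!muln2; lia.
rewrite -addnn exprS exprD !invfM.
rewrite (_ : _ * q ^+ j.*2 = q^-1 * (a * a * q ^+ j.*2)); last by ring.
by rewrite eq_q mulVf ?subrr ?q_neq0.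
Qed.

Lemma denP_neq0 k : (k <= N)%N -> denP q g a k != 0.
Proof.
move=> le_kN; rewrite !mulf_neq0 //; apply: qpoch_neq0 => i lt_ik.
- by apply: one_sub_expVn_expn_neq0; apply/eqP; lia.
- exact: one_add_expVn_expn_neq0.
- by have := one_sub_g_neq0 i (isT : (1 <= 1 <= 3)%N); rewrite expr1.
- exact: one_sub_expSn_neq0.
Qed.

Lemma denQ_neq0 k : (k <= N)%N -> denQ q g a k != 0.
Proof.
move=> le_kN; rewrite !mulf_neq0 //; apply: qpoch_neq0 => i lt_ik.
- apply: contra_neq (@one_sub_expVn_expn_neq0 N.*2 i.*2 _) => [<-|]; last by apply/eqP; lia.
  by rewrite -invfM -!exprD !addnn -exprM mul2n.
- by rewrite -exprM one_sub_g_neq0.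
- by rewrite -exprM one_sub_g_neq0.
- apply: contra_neq (one_sub_expSn_neq0 i.*2.+1) => <-.
  by rewrite -exprM mul2n !exprS; ring.
Qed.

Lemma alpha_neq0 m : (0 < m <= N.*2)%N -> alpha q g a m != 0.
Proof.
case: m => // m /= le_mN; rewrite /alpha !mulf_neq0 ?invr_neq0 ?alpha_den_neq0 ?q_neq0 ?a2_neq //.
- apply: contra_neq (@one_sub_expVn_expn_neq0 N.*2 m _) => [<-|]; last by apply/eqP; lia.
  by rewrite exprS -invfM -exprD addnn; field; rewrite q_neq0 expf_neq0 ?q_neq0.
- by have := one_sub_g_neq0 m.+1 (isT : (1 <= 1 <= 3)%N); rewrite expr1 [q ^+ m.+2]exprS mulrA.
- exact: a2_neq.
Qed.

Lemma sumP_odd_eq n z : (0 < N)%N -> (n <= N)%N -> z != 0 ->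
  (2 * n + 1 <= N)%N \/ (exists2 x, (x <= N)%N & z = q ^- x) ->
  sumP q g a N z (2 * n).+1 = (z - g * q / z) / (1 - g * q) * sumQ q g a N z n.
Proof.
move=> N_gt0 le_nN z_neq0 hterm.
have recP m : (m <= 2 * n)%N -> (z - g * q / z) * sumP q g a N z m
    = alpha q g a m * sumP q g a N z m.+1 + delta q g a m * sumP q g a N z m.-1.
  move=> le_m; apply: (sumP_rec q_neq0 a2_neq) => //; first exact: denP_neq0.
  case: hterm => [?|[x le_xN ->]]; first by left; lia.
  by right; rewrite /baseP qpoch_expVn_eq0 ?mul0r ?q_neq0.
apply: (odd_terms_eq recP (delta0 g q_neq0 a2_neq)) => // [j lt_jn|j lt_jn|].
- by apply: (sumQ_rec q_neq0 a2_neq) => //; [lia | exact: denQ_neq0].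
- by rewrite mulf_neq0 // alpha_neq0 //; lia.
have := recP 0%N (leq0n _).
rewrite (sumP0 g a q_neq0) (sumQ0 g a q_neq0) !mulr1 (delta0 g q_neq0 a2_neq) addr0.
rewrite (alpha0 g q_neq0 a2_neq) => ->.
by field; have := one_sub_g_neq0 0 (isT : (1 <= 1 <= 3)%N); rewrite expr1 expr0 mulr1.
Qed.

Lemma phi43_sumP n z : (n <= N)%N ->
  (2 * n + 1 <= N)%N \/ (exists2 x, (x <= N)%N & z = q ^- x) ->
  phi43 q (q ^- (2 * n + 1)) (q ^- (2 * (N - n))) z (- g * q / z)
    a (- a) (g * q) (2 * N + 2)
  = sumP q g a N z (2 * n).+1.
Proof.
move=> le_nN hterm.
have [j le_jN hj] : exists2 j, (j <= N)%N &
    has (eq_op^~ (q ^- j)) [:: q ^- (2 * n + 1); q ^- (2 * (N - n)); z; - g * q / z].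
  case: hterm => [le_2n1_N | [x le_xN ->]]; [exists (2 * n + 1)%N | exists x] => //=;
    by rewrite eqxx ?orbT.
rewrite (phi43E _ _ _ q_neq0 le_jN _ hj); last by lia.
have -> : q ^- (2 * (N - n)) = a * a * q ^+ (2 * n).+1 / q.
  have E : q ^+ N * q ^+ N = q ^+ (2 * (N - n)) * q ^+ (2 * n).
    by rewrite -!exprD; congr (_ ^+ _); lia.
  by rewrite -invfM E invfM exprS; field; rewrite q_neq0 !expf_neq0 ?q_neq0.
by apply: eq_bigr => k _; rewrite /phi43_term /wP /denP /baseP addn1; ring.
Qed.

Lemma phi43_sumQ n z : (n <= N)%N ->
  phi43 (q ^+ 2) (q ^- (2 * n)) (q ^ ((2 * n)%:Z - (2 * N)%:Z + 1))
    (z ^+ 2) (g ^+ 2 * q ^+ 2 / z ^+ 2) (q ^- (2 * N)) (g * q ^+ 2) (g * q ^+ 3) (2 * N + 2)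
  = sumQ q g a N z n.
Proof.
move=> le_nN; have q2_neq0 : q ^+ 2 != 0 by rewrite expf_neq0 // q_neq0.
have hj : has (eq_op^~ ((q ^+ 2) ^- n)) [:: q ^- (2 * n); q ^ ((2 * n)%:Z - (2 * N)%:Z + 1);
    z ^+ 2; g ^+ 2 * q ^+ 2 / z ^+ 2] by rewrite /= -exprM eqxx.
rewrite (phi43E _ _ _ q2_neq0 le_nN _ hj); last by lia.
have -> : q ^- (2 * n) = (q ^+ 2) ^- n by rewrite -exprM.
have -> : q ^ ((2 * n)%:Z - (2 * N)%:Z + 1) = a * a * (q ^+ 2) ^+ n * q.
  rewrite !expfzDr ?q_neq0 // ?expr1z -exprnP -exprnN exprn_sq !exprn_double invfM; ring.
have -> : q ^- (2 * N) = a * a by rewrite exprn_double invfM.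
by apply: eq_bigr => k _; rewrite /phi43_term /wQ /denQ /baseQ; ring.
Qed.

End Specialization.

Theorem mainTheorem10 (R : numClosedFieldType) (q gamma : R) (N n : nat)
  (hq0 : 0 < q) (hq1 : q < 1) (hN : (0 < N)%N) (hn : (n <= N)%N)
  (hgamma : forall (k j : nat), (1 <= k <= 3)%N -> gamma * q ^+ k != q ^- j) :
  ((2 * n + 1 <= N)%N ->
    forall z : R, z != 0 ->
      phi43 q (q ^- (2 * n + 1)) (q ^- (2 * (N - n))) z (- gamma * q / z)
              (q ^- N) (- q ^- N) (gamma * q) (2 * N + 2)
      = (z - gamma * q / z) / (1 - gamma * q) *
        phi43 (q ^+ 2) (q ^- (2 * n)) (q ^ ((2 * n)%:Z - (2 * N)%:Z + 1))
              (z ^+ 2) (gamma ^+ 2 * q ^+ 2 / z ^+ 2)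
              (q ^- (2 * N)) (gamma * q ^+ 2) (gamma * q ^+ 3) (2 * N + 2))
  /\
  ((N < 2 * n + 1)%N ->
    forall x : nat, (x <= N)%N ->
      phi43 q (q ^- (2 * n + 1)) (q ^- (2 * (N - n))) (q ^- x)
              (- gamma * q ^+ (x + 1))
              (q ^- N) (- q ^- N) (gamma * q) (2 * N + 2)
      = (q ^- x - gamma * q ^+ (x + 1)) / (1 - gamma * q) *
        phi43 (q ^+ 2) (q ^- (2 * n)) (q ^ ((2 * n)%:Z - (2 * N)%:Z + 1))
              (q ^- (2 * x)) (gamma ^+ 2 * q ^+ (2 * x + 2))
              (q ^- (2 * N)) (gamma * q ^+ 2) (gamma * q ^+ 3) (2 * N + 2)).
Proof.
split=> [le_2n1_N z z_neq0 | _ x le_xN].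
  rewrite phi43_sumP ?phi43_sumQ //; last by left.
  by apply: sumP_odd_eq => //; left.
have qx_neq0 : q ^+ x != 0 by rewrite expf_neq0 // q_neq0.
have -> : q ^+ (x + 1) = q / q ^- x by rewrite invrK addn1 exprS.
have -> : q ^- (2 * x) = (q ^- x) ^+ 2 by rewrite exprn_double expr2 invfM.
have -> : q ^+ (2 * x + 2) = q ^+ 2 / (q ^- x) ^+ 2.
  by rewrite exprD exprn_double; field.
rewrite [- gamma * (_ / _)]mulrA [gamma * (q / _)]mulrA [gamma ^+ 2 * (_ / _)]mulrA.
rewrite phi43_sumP ?phi43_sumQ //; last by right; exists x.
by apply: sumP_odd_eq => //; [rewrite invr_neq0 | right; exists x].
Qed.
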